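(* A $4$-dimensional $pp$-wave $g_{ppw}=2\,du\,dv+H(u,x_1,x_2)\,du^2+dx_1^2+dx_2^2$ is (locally) isotropically conformally Einstein if and only if its Weyl tensor is harmonic, $\operatorname{div}W=0$.
   Context: A Lorentzian metric $g$ is isotropically conformally Einstein if (locally) there is a smooth function $f$ with $\nabla f$ nowhere zero and null, $g(\nabla f,\nabla f)=0$, such that $e^{-f}g$ is an Einstein metric; equivalently, $\operatorname{Hes}_f+\rho+\frac12 df\otimes df=\lambda g$ for some function $\lambda$ (quasi-Einstein equation with $\mu=-\frac12$), where $\rho$ is the Ricci tensor and $\operatorname{Hes}_f=\nabla df$. $W$ denotes the Weyl conformal curvature tensor and $\operatorname{div}W(X,Y,Z)=-\frac12\{(\nabla_X\rho)(Y,Z)-(\nabla_Y\rho)(X,Z)\}+\frac1{12}\{X(\tau)g(Y,Z)-Y(\tau)g(X,Z)\}$ with $\tau$ the scalar curvature. *)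

From Stdlib Require Import Reals Lra List ClassicalEpsilon.
Open Scope R_scope.

(* Points of R^4 with coordinates (u, v, x1, x2) = indices 0,1,2,3. *)
Definition pt : Type := (R * R * R * R)%type.

Definition coord (p : pt) (i : nat) : R :=
  match p with (a, b, c, d) =>
    match i with 0%nat => a | 1%nat => b | 2%nat => c | _ => d end end.

Definition upd (p : pt) (i : nat) (t : R) : pt :=
  match p with (a, b, c, d) =>
    match i with
    | 0%nat => (t, b, c, d) | 1%nat => (a, t, c, d)
    | 2%nat => (a, b, t, d) | 3%nat => (a, b, c, t)
    | _ => p end end.

Definition dist4 (p q : pt) : R :=
  Rmax (Rmax (Rabs (coord p 0 - coord q 0)) (Rabs (coord p 1 - coord q 1)))
       (Rmax (Rabs (coord p 2 - coord q 2)) (Rabs (coord p 3 - coord q 3))).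

Definition is_open (U : pt -> Prop) : Prop :=
  forall p, U p -> exists e, 0 < e /\ forall q, dist4 p q < e -> U q.

Definition cont_on (U : pt -> Prop) (F : pt -> R) : Prop :=
  forall p, U p -> forall eps, 0 < eps -> exists del, 0 < del /\
    forall q, U q -> dist4 p q < del -> Rabs (F q - F p) < eps.

Definition smooth_on (U : pt -> Prop) (F : pt -> R) : Prop :=
  exists D : list nat -> pt -> R,
    (forall p, U p -> D nil p = F p) /\
    (forall l i p, (i < 4)%nat -> U p ->
        derivable_pt_lim (fun t => D l (upd p i t)) (coord p i) (D (i :: l) p)) /\
    (forall l, cont_on U (D l)).

(* Partial derivative d/dx^i (the unique limit when it exists). *)
Definition pd (i : nat) (F : pt -> R) (p : pt) : R :=
  epsilon (inhabits 0) (fun l => derivable_pt_lim (fun t => F (upd p i t)) (coord p i) l).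

Definition sum4 (f : nat -> R) : R := f 0%nat + f 1%nat + f 2%nat + f 3%nat.

(* Metric components g p i j and inverse metric components gi p i j. *)
Section Curv.
Variables (g gi : pt -> nat -> nat -> R).

Definition Gam (k i j : nat) (p : pt) : R :=
  / 2 * sum4 (fun l => gi p k l *
     (pd i (fun q => g q j l) p + pd j (fun q => g q i l) p - pd l (fun q => g q i j) p)).

(* R(d_i,d_j) d_k = Riem l i j k d_l *)
Definition Riem (l i j k : nat) (p : pt) : R :=
  pd i (Gam l j k) p - pd j (Gam l i k) p
  + sum4 (fun m => Gam l i m p * Gam m j k p - Gam l j m p * Gam m i k p).

Definition Ric (j k : nat) (p : pt) : R := sum4 (fun i => Riem i i j k p).

Definition Scal (p : pt) : R := sum4 (fun j => sum4 (fun k => gi p j k * Ric j k p)).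

(* (nabla_i rho)(d_j, d_k) *)
Definition covRic (i j k : nat) (p : pt) : R :=
  pd i (Ric j k) p - sum4 (fun m => Gam m i j p * Ric m k p + Gam m i k p * Ric j m p).

Definition divW (i j k : nat) (p : pt) : R :=
  - / 2 * (covRic i j k p - covRic j i k p)
  + / 12 * (pd i Scal p * g p j k - pd j Scal p * g p i k).

Definition Hess (f : pt -> R) (i j : nat) (p : pt) : R :=
  pd i (fun q => pd j f q) p - sum4 (fun k => Gam k i j p * pd k f p).

Definition grad (f : pt -> R) (i : nat) (p : pt) : R := sum4 (fun j => gi p i j * pd j f p).

Definition loc_iso_conf_Einstein (U : pt -> Prop) : Prop :=
  forall p, U p -> exists V : pt -> Prop, is_open V /\ V p /\ (forall q, V q -> U q) /\
    exists f : pt -> R, smooth_on V f /\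
      (forall q, V q -> exists i, (i < 4)%nat /\ grad f i q <> 0) /\
      (forall q, V q -> sum4 (fun i => sum4 (fun j => gi q i j * pd i f q * pd j f q)) = 0) /\
      exists lam : pt -> R, forall q i j, V q -> (i < 4)%nat -> (j < 4)%nat ->
        Hess f i j q + Ric i j q + / 2 * (pd i f q * pd j f q) = lam q * g q i j.

Definition harmonic_Weyl (U : pt -> Prop) : Prop :=
  forall q i j k, U q -> (i < 4)%nat -> (j < 4)%nat -> (k < 4)%nat -> divW i j k q = 0.
End Curv.

Definition Hof (H : R -> R -> R -> R) (p : pt) : R := H (coord p 0) (coord p 2) (coord p 3).

Definition ppw_g (H : R -> R -> R -> R) (p : pt) (i j : nat) : R :=
  match i, j with
  | 0%nat, 0%nat => Hof H p
  | 0%nat, 1%nat | 1%nat, 0%nat | 2%nat, 2%nat | 3%nat, 3%nat => 1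
  | _, _ => 0 end.

Definition ppw_gi (H : R -> R -> R -> R) (p : pt) (i j : nat) : R :=
  match i, j with
  | 1%nat, 1%nat => - Hof H p
  | 0%nat, 1%nat | 1%nat, 0%nat | 2%nat, 2%nat | 3%nat, 3%nat => 1
  | _, _ => 0 end.

From Stdlib Require Import Reals Lra Lia List.
From Stdlib Require Import ClassicalEpsilon FunctionalExtensionality PropExtensionality.
From Coquelicot Require Import Coquelicot.
Open Scope R_scope.

(* The curvature of a pp-wave is explicit: the only nonzero Ricci component is
   ρ_uu = -(H_22 + H_33)/2, the scalar curvature vanishes, and div W = 0 reduces
   to ∂_{x_1} ρ_uu = ∂_{x_2} ρ_uu = 0, i.e. ρ_uu depends on u only (v-derivatives
   vanish because nothing depends on v).
   - Forward: differentiating |df|^2 = 0 and using the quasi-Einstein equation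
     gives λ df = (∂_v f) ρ_uu du, so λ = 0 since df ≠ 0.  Where ∂_v f ≠ 0 this
     forces ρ_uu = 0 nearby; where ∂_v f vanishes, (∂_v f) e^{f/2} is locally
     constant, so ∂_v f = 0 on a ball, and then ρ_uu = -(f_uu + f_u^2/2) with f_u
     independent of x_1, x_2.
   - Backward: with ρ_uu = K(u), the function f = F(u) with F'' + F'^2/2 = -K
     solves the equation with λ = 0.  F = 2 ln c for a positive solution of the
     linear ODE c'' = -(K/2) c, obtained by Picard iteration; smoothness of F
     follows since all derivatives of F' are polynomials in F' and K^(n). *)

Ltac destruct_pt p :=
  let a := fresh "a" in let b := fresh "b" in let c := fresh "c" in let d := fresh "d" in
  destruct p as [[[a b] c] d].

Lemma coord_upd_same p i t : (i < 4)%nat -> coord (upd p i t) i = t.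
Proof. intros. destruct_pt p. destruct i as [|[|[|[|i]]]]; try lia; reflexivity. Qed.

Lemma coord_upd_other p i j t : (j < 4)%nat -> i <> j -> coord (upd p i t) j = coord p j.
Proof.
  intros. destruct_pt p.
  destruct i as [|[|[|[|i]]]]; destruct j as [|[|[|[|j]]]]; try lia; reflexivity.
Qed.

Lemma upd_out_of_range p i t : (4 <= i)%nat -> upd p i t = p.
Proof. intros. destruct_pt p. destruct i as [|[|[|[|i]]]]; try lia; reflexivity. Qed.

Lemma upd_upd_same p i s t : upd (upd p i s) i t = upd p i t.
Proof. destruct_pt p. destruct i as [|[|[|[|i]]]]; reflexivity. Qed.

Lemma upd_comm p i j s t : i <> j -> upd (upd p i s) j t = upd (upd p j t) i s.
Proof.
  intros. destruct_pt p.
  destruct i as [|[|[|[|i]]]]; destruct j as [|[|[|[|j]]]]; try lia; reflexivity.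
Qed.

Lemma upd_coord p i : upd p i (coord p i) = p.
Proof. destruct_pt p. destruct i as [|[|[|[|i]]]]; reflexivity. Qed.

Lemma dist4_lt p q e :
  (forall k, (k < 4)%nat -> Rabs (coord p k - coord q k) < e) -> dist4 p q < e.
Proof.
  intro Hk. unfold dist4.
  repeat apply Rmax_lub_lt; apply Hk; lia.
Qed.

Lemma dist4_coord_le p q k : (k < 4)%nat -> Rabs (coord p k - coord q k) <= dist4 p q.
Proof.
  intros Hk. unfold dist4.
  destruct k as [|[|[|[|k]]]]; try lia.
  - eapply Rle_trans; [apply Rmax_l|apply Rmax_l].
  - eapply Rle_trans; [apply Rmax_r|apply Rmax_l].
  - eapply Rle_trans; [apply Rmax_l|apply Rmax_r].
  - eapply Rle_trans; [apply Rmax_r|apply Rmax_r].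
Qed.

Lemma dist4_refl p : dist4 p p = 0.
Proof. unfold dist4. rewrite !Rminus_diag, !Rabs_R0, !Rmax_left; lra. Qed.

Lemma dist4_triangle p q r : dist4 p r <= dist4 p q + dist4 q r.
Proof.
  apply Rnot_lt_le; intro C.
  assert (Hlt : dist4 p r < dist4 p r); [|lra].
  apply dist4_lt. intros k Hk. eapply Rle_lt_trans; [|exact C].
  replace (coord p k - coord r k) with ((coord p k - coord q k) + (coord q k - coord r k)) by ring.
  eapply Rle_trans; [apply Rabs_triang|].
  apply Rplus_le_compat; apply dist4_coord_le; exact Hk.
Qed.

Lemma dist4_upd p i t e : 0 < e -> Rabs (t - coord p i) < e -> dist4 p (upd p i t) < e.
Proof.
  intros He Ht. apply dist4_lt. intros k Hk.
  destruct (Nat.lt_ge_cases i 4) as [Hi|Hi].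
  - destruct (Nat.eq_dec i k) as [->|Hne].
    + rewrite coord_upd_same, Rabs_minus_sym by lia. exact Ht.
    + rewrite coord_upd_other, Rminus_diag, Rabs_R0 by assumption. exact He.
  - rewrite upd_out_of_range, Rminus_diag, Rabs_R0 by exact Hi. exact He.
Qed.

Lemma dist4_upd_centre p q e m :
  0 < e -> dist4 p q < e -> dist4 p (upd q m (coord p m)) < e.
Proof.
  intros He Hq. apply dist4_lt. intros k Hk. destruct (Nat.eq_dec m k) as [->|Hne].
  - rewrite coord_upd_same, Rminus_diag, Rabs_R0 by exact Hk. exact He.
  - rewrite coord_upd_other by assumption. eapply Rle_lt_trans; [apply dist4_coord_le|]; eauto.
Qed.

Lemma ball_open p e : is_open (fun q => dist4 p q < e).
Proof.
  intros q Hq. exists (e - dist4 p q). split; [lra|].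
  intros r Hr. pose proof (dist4_triangle p q r). lra.
Qed.

Lemma open_inter (A B : pt -> Prop) : is_open A -> is_open B -> is_open (fun q => A q /\ B q).
Proof.
  intros HA HB q [Aq Bq].
  destruct (HA q Aq) as [e1 [He1 H1]], (HB q Bq) as [e2 [He2 H2]].
  exists (Rmin e1 e2). split; [apply Rmin_pos; auto|].
  intros r Hr. split; [apply H1|apply H2]; eapply Rlt_le_trans; eauto; [apply Rmin_l|apply Rmin_r].
Qed.

(* Versions of the Stdlib derivative rules stated on lambda-terms, so that they
   can be applied to goals whose functions are not written with plus_fct etc. *)
Lemma dpl_eq f x a b : derivable_pt_lim f x a -> a = b -> derivable_pt_lim f x b.
Proof. intros Hf <-. exact Hf. Qed.
Lemma dpl_const c x : derivable_pt_lim (fun _ => c) x 0.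
Proof. apply derivable_pt_lim_const. Qed.
Lemma dpl_scal c f x a : derivable_pt_lim f x a -> derivable_pt_lim (fun t => c * f t) x (c * a).
Proof. apply (derivable_pt_lim_scal f). Qed.
Lemma dpl_opp f x a : derivable_pt_lim f x a -> derivable_pt_lim (fun t => - f t) x (- a).
Proof. apply (derivable_pt_lim_opp f). Qed.
Lemma dpl_plus f g x a b : derivable_pt_lim f x a -> derivable_pt_lim g x b ->
  derivable_pt_lim (fun t => f t + g t) x (a + b).
Proof. apply (derivable_pt_lim_plus f g). Qed.
Lemma dpl_minus f g x a b : derivable_pt_lim f x a -> derivable_pt_lim g x b ->
  derivable_pt_lim (fun t => f t - g t) x (a - b).
Proof. apply (derivable_pt_lim_minus f g). Qed.
Lemma dpl_mult f g x a b : derivable_pt_lim f x a -> derivable_pt_lim g x b ->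
  derivable_pt_lim (fun t => f t * g t) x (a * g x + f x * b).
Proof. apply (derivable_pt_lim_mult f g). Qed.
Lemma dpl_exp f x a : derivable_pt_lim f x a ->
  derivable_pt_lim (fun t => exp (f t)) x (exp (f x) * a).
Proof. intros Hf. apply (derivable_pt_lim_comp f exp); [exact Hf|apply derivable_pt_lim_exp]. Qed.

Ltac dchain :=
  repeat first [ apply dpl_plus | apply dpl_minus | apply dpl_opp | apply dpl_mult
               | apply dpl_exp | apply dpl_scal | apply dpl_const ].

Lemma derivable_pt_lim_locally f g x l e : 0 < e ->
  (forall t, Rabs (t - x) < e -> f t = g t) ->
  derivable_pt_lim f x l -> derivable_pt_lim g x l.
Proof.
  intros He Hfg Hf eps Heps. destruct (Hf eps Heps) as [d Hd].
  assert (Hm : 0 < Rmin d e) by (apply Rmin_pos; [apply cond_pos|lra]).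
  exists (mkposreal _ Hm). intros h Hh0 Hh. simpl in Hh.
  rewrite <- !Hfg.
  - apply Hd; auto. eapply Rlt_le_trans; [exact Hh|apply Rmin_l].
  - rewrite Rminus_diag, Rabs_R0; lra.
  - replace (x + h - x) with h by ring. eapply Rlt_le_trans; [exact Hh|apply Rmin_r].
Qed.

Lemma pd_spec i F p l :
  derivable_pt_lim (fun t => F (upd p i t)) (coord p i) l -> pd i F p = l.
Proof.
  intro Hl. unfold pd.
  pose proof (epsilon_spec (inhabits 0)
    (fun l => derivable_pt_lim (fun t => F (upd p i t)) (coord p i) l) (ex_intro _ l Hl)) as He.
  eapply uniqueness_limite; eassumption.
Qed.

Lemma pd_const i c p : pd i (fun _ => c) p = 0.
Proof. apply pd_spec, dpl_const. Qed.

Lemma pd_out_of_range i F p : (4 <= i)%nat -> pd i F p = 0.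
Proof.
  intros Hi. apply pd_spec. eapply derivable_pt_lim_ext; [|apply (dpl_const (F p))].
  intro t. rewrite upd_out_of_range by exact Hi. reflexivity.
Qed.

Lemma pd_locally V F G i p : is_open V -> V p ->
  (forall q, V q -> F q = G q) -> pd i F p = pd i G p.
Proof.
  intros HV Hp HFG. destruct (HV p Hp) as [e [He HeV]].
  unfold pd. f_equal. apply functional_extensionality. intro l.
  apply propositional_extensionality.
  split; intro D; eapply derivable_pt_lim_locally; try exact D; try exact He;
    intros t Ht; [|symmetry]; apply HFG, HeV, dist4_upd; auto.
Qed.


Lemma null_derivative_const (phi : R -> R) a b :
  (forall t, Rmin a b <= t <= Rmax a b -> derivable_pt_lim phi t 0) -> phi b = phi a.
Proof.
  intros Hd.
  destruct (MVT_gen phi a b (fun _ => 0)) as [c [_ E]].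
  - intros x Hx. apply is_derive_Reals, Hd. lra.
  - intros x Hx. apply derivable_continuous_pt. exists 0. apply Hd. exact Hx.
  - lra.
Qed.

Section Ball.
Variables (F : pt -> R) (p : pt) (e : R).
Hypothesis He : 0 < e.

Lemma constant_along m :
  (m < 4)%nat ->
  (forall q, dist4 p q < e -> derivable_pt_lim (fun t => F (upd q m t)) (coord q m) 0) ->
  forall q s, dist4 p q < e -> Rabs (s - coord p m) < e -> F (upd q m s) = F q.
Proof.
  intros Hm Hd q s Hq Hs.
  rewrite <- (upd_coord q m) at 2.
  apply (null_derivative_const (fun t => F (upd q m t))). intros t Ht.
  assert (Hin : dist4 p (upd q m t) < e).
  { apply dist4_lt. intros k Hk. destruct (Nat.eq_dec m k) as [->|Hne].
    - rewrite coord_upd_same by exact Hk.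
      pose proof (Rle_lt_trans _ _ _ (dist4_coord_le p q k Hk) Hq) as Hqk.
      apply Rabs_def2 in Hqk. apply Rabs_def2 in Hs.
      apply Rabs_def1; unfold Rmin, Rmax in Ht; destruct (Rle_dec (coord q k) s); lra.
    - rewrite coord_upd_other by assumption.
      eapply Rle_lt_trans; [apply dist4_coord_le|]; eauto. }
  pose proof (Hd _ Hin) as D0. rewrite coord_upd_same in D0 by exact Hm.
  eapply derivable_pt_lim_ext; [|exact D0].
  intro x. simpl. rewrite upd_upd_same. reflexivity.
Qed.

Fixpoint freeze (ms : list nat) (q : pt) : pt :=
  match ms with
  | nil => q
  | m :: ms => upd (freeze ms q) m (coord p m)
  end.

Lemma freeze_invariant ms :
  (forall m, In m ms -> (m < 4)%nat /\ forall q, dist4 p q < e ->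
     derivable_pt_lim (fun t => F (upd q m t)) (coord q m) 0) ->
  forall q, dist4 p q < e -> dist4 p (freeze ms q) < e /\ F (freeze ms q) = F q.
Proof.
  intros Hms q Hq. induction ms as [|m ms IH]; simpl; [auto|].
  destruct IH as [Hin Heq]; [intros; apply Hms; right; assumption|].
  destruct (Hms m (or_introl eq_refl)) as [Hm Hd].
  split; [apply dist4_upd_centre; assumption|].
  rewrite <- Heq. apply constant_along; try assumption.
  rewrite Rminus_diag, Rabs_R0. exact He.
Qed.

End Ball.

Lemma ball_constant (F : pt -> R) p e : 0 < e ->
  (forall q m, dist4 p q < e -> (m < 4)%nat ->
     derivable_pt_lim (fun t => F (upd q m t)) (coord q m) 0) ->
  forall q, dist4 p q < e -> F q = F p.
Proof.
  intros He Hd q Hq.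
  destruct (freeze_invariant F p e He (3 :: 2 :: 1 :: 0 :: nil)%nat) with (q := q)
    as [_ <-]; [|exact Hq|].
  - intros m Hm. split; [simpl in Hm; lia|]. intros; apply Hd; [assumption|simpl in Hm; lia].
  - f_equal. destruct_pt p. destruct_pt q. reflexivity.
Qed.

Lemma ball_depends_on_u (F : pt -> R) p e : 0 < e ->
  (forall q m, dist4 p q < e -> (m = 1 \/ m = 2 \/ m = 3)%nat ->
     derivable_pt_lim (fun t => F (upd q m t)) (coord q m) 0) ->
  forall q, dist4 p q < e -> F q = F (upd p 0 (coord q 0)).
Proof.
  intros He Hd q Hq.
  destruct (freeze_invariant F p e He (3 :: 2 :: 1 :: nil)%nat) with (q := q)
    as [_ <-]; [|exact Hq|].
  - intros m Hm. split; [simpl in Hm; lia|]. intros; apply Hd; [assumption|simpl in Hm; lia].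
  - f_equal. destruct_pt p. destruct_pt q. reflexivity.
Qed.

(* The pp-wave metric does not depend on the coordinate v = x^1; neither do its
   curvature quantities, which kills all their d/dv derivatives. *)
Definition v_independent (F : pt -> R) : Prop := forall q t, F (upd q 1 t) = F q.

Lemma pd1_v_independent F q : v_independent F -> pd 1 F q = 0.
Proof.
  intro HF. apply pd_spec. eapply derivable_pt_lim_ext; [|apply dpl_const].
  intro t. simpl. symmetry. apply HF.
Qed.

Lemma pd_v_independent i F : v_independent F -> v_independent (pd i F).
Proof.
  intros HF q t. destruct (Nat.eq_dec i 1) as [->|Hi].
  - rewrite !pd1_v_independent; auto.
  - unfold pd. replace (coord (upd q 1 t) i) with (coord q i)
      by (destruct_pt q; destruct i as [|[|[|[|i]]]]; try lia; reflexivity).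
    f_equal. apply functional_extensionality. intro l.
    f_equal. apply functional_extensionality. intro s.
    rewrite upd_comm by auto. apply HF.
Qed.

Lemma Hof_v_independent H : v_independent (Hof H).
Proof. intros q t. destruct_pt q. reflexivity. Qed.

(** * Curvature of a pp-wave *)

Section PPWaveCurvature.
Variable H : R -> R -> R -> R.
Notation g := (ppw_g H).
Notation gi := (ppw_gi H).

Definition dH (i : nat) (p : pt) : R := pd i (Hof H) p.

Lemma dH_v_independent i : v_independent (dH i).
Proof. apply pd_v_independent, Hof_v_independent. Qed.

Definition ppw_Gam (k i j : nat) (p : pt) : R :=
  match k, i, j with
  | 1, 0, 0 => / 2 * dH 0 p
  | 1, 0, 2 | 1, 2, 0 => / 2 * dH 2 p
  | 1, 0, 3 | 1, 3, 0 => / 2 * dH 3 p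
  | 2, 0, 0 => - / 2 * dH 2 p
  | 3, 0, 0 => - / 2 * dH 3 p
  | _, _, _ => 0
  end.

Lemma Gam_ppw k i j p : Gam g gi k i j p = ppw_Gam k i j p.
Proof.
  assert (HdH1 : pd 1 (Hof H) p = 0) by apply pd1_v_independent, Hof_v_independent.
  unfold Gam, sum4.
  destruct k as [|[|[|[|k]]]]; destruct i as [|[|[|[|i]]]]; destruct j as [|[|[|[|j]]]];
  cbv beta iota delta [ppw_g ppw_gi ppw_Gam];
  change (fun q => Hof H q) with (Hof H);
  rewrite ?pd_const; try (rewrite (pd_out_of_range (S (S (S (S _))))) by lia);
  rewrite ?HdH1; unfold dH; ring.
Qed.

Lemma Gam_ppw_fun k i j : Gam g gi k i j = ppw_Gam k i j.
Proof. apply functional_extensionality. intro p. apply Gam_ppw. Qed.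

Lemma ppw_Gam_v_independent k i j : v_independent (ppw_Gam k i j).
Proof.
  intros q t. pose proof (dH_v_independent) as HV. unfold v_independent in HV.
  destruct k as [|[|[|[|k]]]]; destruct i as [|[|[|[|i]]]]; destruct j as [|[|[|[|j]]]];
  cbv beta iota delta [ppw_Gam]; rewrite ?HV; reflexivity.
Qed.

Lemma Ric_v_independent j k : v_independent (Ric g gi j k).
Proof.
  intros q t. unfold Ric, Riem, sum4. rewrite !Gam_ppw_fun.
  rewrite !(pd_v_independent _ _ (ppw_Gam_v_independent _ _ _)), !ppw_Gam_v_independent.
  reflexivity.
Qed.

Variables (U : pt -> Prop) (D : list nat -> pt -> R).
Hypothesis HU : is_open U.
Hypothesis HD0 : forall p, U p -> D nil p = Hof H p.
Hypothesis HD1 : forall l i p, (i < 4)%nat -> U p ->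
  derivable_pt_lim (fun t => D l (upd p i t)) (coord p i) (D (i :: l) p).

Lemma pd_D l i p : U p -> (i < 4)%nat -> pd i (D l) p = D (i :: l) p.
Proof. intros. apply pd_spec. auto. Qed.

Lemma dH_D i p : U p -> (i < 4)%nat -> dH i p = D (i :: nil) p.
Proof.
  intros Up Hi. unfold dH. rewrite (pd_locally U (Hof H) (D nil)); auto.
  - apply pd_D; auto.
  - intros; symmetry; auto.
Qed.

Lemma pd_dH c i m p : U p -> (i < 4)%nat -> (m < 4)%nat ->
  pd i (fun q => c * dH m q) p = c * D (i :: m :: nil) p.
Proof.
  intros Up Hi Hm. rewrite (pd_locally U _ (fun q => c * D (m :: nil) q)); auto.
  - apply pd_spec, dpl_scal. auto.
  - intros. rewrite dH_D; auto.
Qed.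

Lemma D_v m p : U p -> (m < 4)%nat -> D (1%nat :: m :: nil) p = 0.
Proof.
  intros Up Hm. rewrite <- pd_D by auto. rewrite (pd_locally U _ (dH m)); auto.
  - apply pd1_v_independent, dH_v_independent.
  - intros. rewrite dH_D; auto.
Qed.

Definition rho_uu (p : pt) : R := - / 2 * (D (2 :: 2 :: nil)%nat p + D (3 :: 3 :: nil)%nat p).

Definition ppw_Ric (j k : nat) (p : pt) : R :=
  match j, k with O, O => rho_uu p | _, _ => 0 end.

Lemma Ric_ppw j k p : U p -> (j < 4)%nat -> (k < 4)%nat -> Ric g gi j k p = ppw_Ric j k p.
Proof.
  intros Up Hj Hk. unfold Ric, Riem, sum4. rewrite !Gam_ppw_fun.
  destruct j as [|[|[|[|j]]]]; destruct k as [|[|[|[|k]]]]; try lia;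
  cbv beta iota delta [ppw_Gam ppw_Ric rho_uu];
  rewrite ?pd_const, ?pd_dH by (auto; lia); rewrite ?D_v by (auto; lia); ring.
Qed.

Lemma Scal_ppw p : U p -> Scal g gi p = 0.
Proof.
  intros Up. unfold Scal, sum4. rewrite !Ric_ppw by (auto; lia).
  cbv beta iota delta [ppw_Ric ppw_gi]. ring.
Qed.

Lemma pd_Ric_other i j k p : U p -> (j < 4)%nat -> (k < 4)%nat -> (j <> 0 \/ k <> 0)%nat ->
  pd i (Ric g gi j k) p = 0.
Proof.
  intros Up Hj Hk Hjk. rewrite (pd_locally U _ (fun _ => 0)); auto.
  - apply pd_const.
  - intros q Uq. rewrite Ric_ppw by auto.
    destruct j as [|[|[|[|j]]]]; destruct k as [|[|[|[|k]]]]; try lia; reflexivity.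
Qed.

Definition d_rho (i j k : nat) (p : pt) : R :=
  match j, k with O, O => pd i (Ric g gi 0 0) p | _, _ => 0 end.

Lemma divW_ppw i j k p : U p -> (i < 4)%nat -> (j < 4)%nat -> (k < 4)%nat ->
  divW g gi i j k p = - / 2 * (d_rho i j k p - d_rho j i k p).
Proof.
  intros Up Hi Hj Hk. unfold divW, covRic, sum4.
  rewrite !(pd_locally U (Scal g gi) (fun _ => 0)) by (auto; intros; apply Scal_ppw; auto).
  rewrite !pd_const, !Gam_ppw, !Ric_ppw by (auto; lia).
  destruct i as [|[|[|[|i]]]]; destruct j as [|[|[|[|j]]]]; destruct k as [|[|[|[|k]]]]; try lia;
  cbv beta iota delta [ppw_Gam ppw_Ric d_rho];
  rewrite ?(pd_Ric_other _ (S _)) by (auto; lia); rewrite ?(pd_Ric_other _ _ (S _)) by (auto; lia);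
  ring.
Qed.

Lemma harmonic_Weyl_ppw : harmonic_Weyl g gi U <->
  (forall p, U p -> pd 2 (Ric g gi 0 0) p = 0 /\ pd 3 (Ric g gi 0 0) p = 0).
Proof.
  split.
  - intros HW p Up. split.
    + pose proof (HW p 2 0 0 Up ltac:(lia) ltac:(lia) ltac:(lia))%nat as E.
      rewrite divW_ppw in E by (auto; lia). unfold d_rho in E. lra.
    + pose proof (HW p 3 0 0 Up ltac:(lia) ltac:(lia) ltac:(lia))%nat as E.
      rewrite divW_ppw in E by (auto; lia). unfold d_rho in E. lra.
  - intros HR q i j k Uq Hi Hj Hk. rewrite divW_ppw by auto.
    assert (Hd : forall m, (m < 4)%nat -> pd m (Ric g gi 0 0) q = 0 \/ m = 0%nat).
    { intros m Hm. destruct (HR q Uq) as [E2 E3].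
      destruct m as [|[|[|[|m]]]]; try lia; auto.
      left. apply pd1_v_independent, Ric_v_independent. }
    unfold d_rho. destruct j, k, i; try ring;
    repeat match goal with |- context [pd ?m (Ric g gi 0 0) q] =>
      let E := fresh in destruct (Hd m ltac:(lia)) as [E|E]; [rewrite E|discriminate E] end;
    ring.
Qed.

End PPWaveCurvature.

(* If G does not depend on x^k near p, neither does its x^m-derivative G',
   so that d G'/d x^k vanishes at p (a weak form of the symmetry of mixed partials). *)
Lemma derivative_inherits_invariance (G G' : pt -> R) p e k m :
  0 < e -> k <> m -> (k < 4)%nat -> (m < 4)%nat ->
  (forall q, dist4 p q < e -> derivable_pt_lim (fun s => G (upd q m s)) (coord q m) (G' q)) ->
  (forall q s, dist4 p q < e -> Rabs (s - coord p k) < e -> G (upd q k s) = G q) ->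
  derivable_pt_lim (fun t => G' (upd p k t)) (coord p k) 0.
Proof.
  intros He Hkm Hk Hm HG' Hinv.
  apply (derivable_pt_lim_locally (fun _ => G' p) _ _ _ e He); [|apply dpl_const].
  intros t Ht. assert (Bt : dist4 p (upd p k t) < e) by (apply dist4_upd; assumption).
  pose proof (HG' _ Bt) as D1. rewrite coord_upd_other in D1 by auto.
  apply (uniqueness_limite (fun s => G (upd p m s)) (coord p m));
    [apply HG'; rewrite dist4_refl; exact He|].
  apply (derivable_pt_lim_locally (fun s => G (upd (upd p k t) m s)) _ _ _ e He); [|exact D1].
  intros s Hs. rewrite upd_comm by auto. apply Hinv; [|exact Ht].
  apply dist4_upd; assumption.
Qed.

(** * Isotropic conformally Einstein pp-waves have harmonic Weyl tensor *)

Section Forward.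
Variables (H : R -> R -> R -> R) (U : pt -> Prop) (D : list nat -> pt -> R).
Hypothesis HU : is_open U.
Hypothesis HD0 : forall p, U p -> D nil p = Hof H p.
Hypothesis HD1 : forall l i p, (i < 4)%nat -> U p ->
  derivable_pt_lim (fun t => D l (upd p i t)) (coord p i) (D (i :: l) p).

Notation g := (ppw_g H).
Notation gi := (ppw_gi H).

Variables (V : pt -> Prop) (f : pt -> R) (Df : list nat -> pt -> R) (lam : pt -> R).
Hypothesis HV : is_open V.
Hypothesis HVU : forall q, V q -> U q.
Hypothesis HF0 : forall p, V p -> Df nil p = f p.
Hypothesis HF1 : forall l i p, (i < 4)%nat -> V p ->
  derivable_pt_lim (fun t => Df l (upd p i t)) (coord p i) (Df (i :: l) p).
Hypothesis HF2 : forall l, cont_on V (Df l).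
Hypothesis Hgrad : forall q, V q -> exists i, (i < 4)%nat /\ grad gi f i q <> 0.
Hypothesis Hnull : forall q, V q ->
  sum4 (fun i => sum4 (fun j => gi q i j * pd i f q * pd j f q)) = 0.
Hypothesis Heq : forall q i j, V q -> (i < 4)%nat -> (j < 4)%nat ->
  Hess g gi f i j q + Ric g gi i j q + / 2 * (pd i f q * pd j f q) = lam q * g q i j.

Notation a k q := (Df (k :: nil)%nat q).
Notation b m k q := (Df (m :: k :: nil)%nat q).
Notation hd k q := (D (k :: nil)%nat q).

Lemma pd_f i q : V q -> (i < 4)%nat -> pd i f q = a i q.
Proof.
  intros Vq Hi. rewrite (pd_locally V f (Df nil)); auto.
  - apply pd_spec; auto.
  - intros; symmetry; auto.
Qed.

Lemma pd_pd_f i j q : V q -> (i < 4)%nat -> (j < 4)%nat ->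
  pd i (fun q => pd j f q) q = b i j q.
Proof.
  intros Vq Hi Hj. rewrite (pd_locally V _ (Df (j :: nil))); auto.
  - apply pd_spec; auto.
  - intros; apply pd_f; auto.
Qed.

Lemma null_coord q : V q ->
  2 * a 0 q * a 1 q - D nil q * a 1 q ^ 2 + a 2 q ^ 2 + a 3 q ^ 2 = 0.
Proof.
  intros Vq. rewrite <- (Hnull q Vq). unfold sum4. cbv beta iota delta [ppw_gi].
  rewrite !pd_f by (auto; lia). rewrite HD0 by auto. ring.
Qed.

Lemma quasi_Einstein_coord q i j : V q -> (i < 4)%nat -> (j < 4)%nat ->
  b i j q = lam q * g q i j + sum4 (fun k => ppw_Gam H k i j q * a k q)
            - ppw_Ric D i j q - / 2 * (a i q * a j q).
Proof.
  intros Vq Hi Hj. pose proof (Heq q i j Vq Hi Hj) as E. unfold Hess, sum4 in E.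
  rewrite pd_pd_f, (Ric_ppw H U D), !Gam_ppw, !pd_f in E by (auto; lia).
  unfold sum4. lra.
Qed.

Lemma null_coord_derivative q m : V q -> (m < 4)%nat ->
  2 * (b m 0 q * a 1 q + a 0 q * b m 1 q) - (hd m q * (a 1 q * a 1 q) + D nil q * (2 * a 1 q * b m 1 q))
  + 2 * a 2 q * b m 2 q + 2 * a 3 q * b m 3 q = 0.
Proof.
  intros Vq Hm.
  pose (Phi := fun r => 2 * a 0 r * a 1 r - D nil r * (a 1 r * a 1 r) + a 2 r * a 2 r + a 3 r * a 3 r).
  eapply uniqueness_limite with (f := fun t => Phi (upd q m t)).
  - unfold Phi. eapply dpl_eq; [dchain; apply HF1 || apply HD1; auto|].
    cbv beta. rewrite !upd_coord. ring.
  - destruct (HV q Vq) as [e [He HeV]].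
    apply (derivable_pt_lim_locally (fun _ => 0) _ _ _ e He); [|apply dpl_const].
    intros t Ht. pose proof (null_coord _ (HeV _ (dist4_upd q m t e He Ht))).
    unfold Phi. nra.
Qed.

Lemma D_v_H q : U q -> hd 1 q = 0.
Proof.
  intros Uq. rewrite <- (dH_D H U D) by (auto; lia). apply pd1_v_independent, Hof_v_independent.
Qed.

(* Substituting the quasi-Einstein equation into the derivative of the null
   condition gives λ·df = a_1 ρ_uu du. *)
Lemma lam_df q m : V q -> (m < 4)%nat ->
  lam q * a m q = match m with O => a 1 q * rho_uu D q | _ => 0 end.
Proof.
  intros Vq Hm. pose proof (null_coord_derivative q m Vq Hm) as E. pose proof (null_coord q Vq) as N.
  assert (Uq : U q) by auto.
  destruct m as [|[|[|[|m]]]]; try lia;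
  rewrite !quasi_Einstein_coord in E by (auto; lia); unfold sum4 in E;
  cbv beta iota delta [ppw_Gam ppw_Ric ppw_g] in E |- *;
  rewrite ?(dH_D H U D) in E by (auto; lia); rewrite ?HD0 in E, N by auto;
  rewrite ?D_v_H in E by auto;
  match type of E with ?L = 0 => match type of N with ?X = 0 =>
  match goal with |- lam q * ?Am = ?B =>
    assert (Z : 2 * (lam q * Am - B) = L + Am * X) by field end end end;
  rewrite E, N in Z; lra.
Qed.

(* Since df never vanishes, the conformal factor λ must vanish. *)
Lemma lam_zero q : V q -> lam q = 0.
Proof.
  intros Vq. destruct (Req_dec (lam q) 0) as [E|E]; [exact E|exfalso].
  pose proof (lam_df q 1 Vq ltac:(lia)) as E1; pose proof (lam_df q 2 Vq ltac:(lia)) as E2;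
  pose proof (lam_df q 3 Vq ltac:(lia)) as E3; pose proof (lam_df q 0 Vq ltac:(lia)) as E0.
  simpl in E1, E2, E3, E0.
  assert (A1 : a 1 q = 0) by (apply (Rmult_eq_reg_l (lam q)); auto; lra).
  assert (A2 : a 2 q = 0) by (apply (Rmult_eq_reg_l (lam q)); auto; lra).
  assert (A3 : a 3 q = 0) by (apply (Rmult_eq_reg_l (lam q)); auto; lra).
  rewrite A1 in E0. assert (A0 : a 0 q = 0) by (apply (Rmult_eq_reg_l (lam q)); auto; lra).
  destruct (Hgrad q Vq) as [i [Hi Hg]]. apply Hg. unfold grad, sum4.
  rewrite !pd_f by (auto; lia). rewrite A0, A1, A2, A3.
  destruct i as [|[|[|[|i]]]]; try lia; cbv beta iota delta [ppw_gi]; ring.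
Qed.

Lemma a1_rho_zero q : V q -> a 1 q * rho_uu D q = 0.
Proof.
  intros Vq. pose proof (lam_df q 0 Vq ltac:(lia)) as E. rewrite lam_zero in E by auto. lra.
Qed.

Lemma forward_a1_nonzero p : V p -> a 1 p <> 0 ->
  pd 2 (Ric g gi 0 0) p = 0 /\ pd 3 (Ric g gi 0 0) p = 0.
Proof.
  intros Vp NZ.
  destruct (HF2 (1%nat :: nil) p Vp (Rabs (a 1 p) / 2)) as [del [Hdel Hc]];
    [pose proof (Rabs_pos_lt _ NZ); lra|].
  set (W := fun q => V q /\ dist4 p q < del).
  assert (OW : is_open W) by (apply open_inter; auto; apply ball_open).
  assert (Wp : W p) by (split; auto; rewrite dist4_refl; auto).
  assert (WR : forall q, W q -> Ric g gi 0 0 q = 0).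
  { intros q [Vq Dq]. rewrite (Ric_ppw H U D) by auto.
    pose proof (Hc q Vq Dq) as C.
    assert (a 1 q <> 0).
    { intro Z. rewrite Z, Rminus_0_l, Rabs_Ropp in C. pose proof (Rabs_pos_lt _ NZ). lra. }
    apply (Rmult_eq_reg_l (a 1 q)); auto. pose proof (a1_rho_zero q Vq). simpl. lra. }
  split; rewrite (pd_locally W _ (fun _ => 0)); auto; apply pd_const.
Qed.

Section OnBall.
Variables (p : pt) (e : R).
Hypothesis He : 0 < e.
Hypothesis HBV : forall q, dist4 p q < e -> V q.

(* ∂_v f · e^{f/2} has vanishing gradient, so ∂_v f vanishes on the ball as soon
   as it vanishes at its centre. *)
Lemma a1_zero_on_ball : a 1 p = 0 -> forall q, dist4 p q < e -> a 1 q = 0.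
Proof.
  intros Z q Bq.
  assert (Const : forall q, dist4 p q < e ->
            a 1 q * exp (/ 2 * Df nil q) = a 1 p * exp (/ 2 * Df nil p)).
  { apply ball_constant; [exact He|]. intros r m Br Hm.
    eapply dpl_eq; [dchain; apply HF1; auto|].
    cbv beta. rewrite upd_coord, quasi_Einstein_coord, lam_zero by auto.
    unfold sum4. destruct m as [|[|[|[|m]]]]; try lia;
      cbv beta iota delta [ppw_Gam ppw_Ric ppw_g]; field. }
  pose proof (Const q Bq) as Zq. rewrite Z, Rmult_0_l in Zq.
  pose proof (exp_pos (/ 2 * Df nil q)). nra.
Qed.

Hypothesis Z1 : forall q, dist4 p q < e -> a 1 q = 0.

Lemma a23_zero_on_ball q : dist4 p q < e -> a 2 q = 0 /\ a 3 q = 0.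
Proof.
  intros Bq. pose proof (null_coord q (HBV q Bq)) as N. rewrite Z1 in N by auto. split; nra.
Qed.

Lemma b_transverse_zero q k : dist4 p q < e -> (k = 2 \/ k = 3)%nat -> b k 0 q = 0.
Proof.
  intros Bq Hk. rewrite quasi_Einstein_coord, lam_zero by (auto; lia). unfold sum4.
  destruct (a23_zero_on_ball q Bq) as [Z2 Z3]. pose proof (Z1 q Bq) as Z1q.
  destruct Hk as [->| ->]; cbv beta iota delta [ppw_Gam ppw_Ric ppw_g]; rewrite Z1q, ?Z2, ?Z3; ring.
Qed.

Lemma rho_on_ball q : dist4 p q < e -> Ric g gi 0 0 q = - b 0 0 q - / 2 * (a 0 q * a 0 q).
Proof.
  intros Bq. rewrite (Ric_ppw H U D) by auto.
  pose proof (quasi_Einstein_coord q 0 0 (HBV q Bq) ltac:(lia) ltac:(lia)) as E.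
  rewrite lam_zero in E by auto. unfold sum4 in E. destruct (a23_zero_on_ball q Bq) as [Z2 Z3].
  rewrite Z1, Z2, Z3 in E by auto. cbv beta iota delta [ppw_Gam ppw_g ppw_Ric] in E |- *. lra.
Qed.

(* ∂_u f is independent of x_1, x_2 on the ball, hence so is ∂_u∂_u f. *)
Lemma b00_transverse_zero k : (k = 2 \/ k = 3)%nat -> Df (k :: 0 :: 0 :: nil)%nat p = 0.
Proof.
  intros Hk.
  assert (Inv : forall q s, dist4 p q < e -> Rabs (s - coord p k) < e -> a 0 (upd q k s) = a 0 q).
  { apply (constant_along (fun q => a 0 q) p e k); [lia|]. intros q Bq.
    rewrite <- (b_transverse_zero q k Bq Hk). apply HF1; auto; lia. }
  eapply uniqueness_limite; [apply HF1; auto; [lia|apply HBV; rewrite dist4_refl; exact He]|].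
  apply (derivative_inherits_invariance (fun q => a 0 q) _ p e k 0); auto; try lia.
  intros q Bq. apply HF1; auto; lia.
Qed.

Lemma forward_a1_zero : pd 2 (Ric g gi 0 0) p = 0 /\ pd 3 (Ric g gi 0 0) p = 0.
Proof.
  assert (OB : is_open (fun q => dist4 p q < e)) by apply ball_open.
  assert (Bp : dist4 p p < e) by (rewrite dist4_refl; exact He).
  assert (Vp : V p) by auto.
  split; rewrite (pd_locally _ _ (fun q => - b 0 0 q - / 2 * (a 0 q * a 0 q)) _ _ OB Bp rho_on_ball);
    (apply pd_spec; eapply dpl_eq; [dchain; apply HF1; auto|]);
    cbv beta; rewrite ?upd_coord, b00_transverse_zero, b_transverse_zero by auto; ring.
Qed.

End OnBall.

Lemma forward_at p : V p -> pd 2 (Ric g gi 0 0) p = 0 /\ pd 3 (Ric g gi 0 0) p = 0.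
Proof.
  intros Vp. destruct (Req_dec (a 1 p) 0) as [Z|NZ]; [|apply forward_a1_nonzero; assumption].
  destruct (HV p Vp) as [e [He HeV]].
  apply (forward_a1_zero p e He HeV). apply a1_zero_on_ball; assumption.
Qed.

End Forward.

Definition cont_at (f : R -> R) (x : R) : Prop :=
  forall eps, 0 < eps -> exists del, 0 < del /\
    forall y, Rabs (y - x) < del -> Rabs (f y - f x) < eps.

Lemma cont_at_iff f x : cont_at f x <-> continuity_pt f x.
Proof.
  split; intros Hf eps Heps; destruct (Hf eps Heps) as [del [Hd Hy]];
    exists del; split; auto.
  - intros y [_ Hy2]. apply Hy. exact Hy2.
  - intros y Hyx. destruct (Req_dec y x) as [->|Hne].
    + rewrite Rminus_diag, Rabs_R0; auto.
    + apply (Hy y). split; [split; [exact I|auto]|exact Hyx].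
Qed.

Lemma cont_at_continuous f x : cont_at f x -> continuous f x.
Proof. intros. apply continuity_pt_filterlim, cont_at_iff; auto. Qed.

Lemma derivable_cont_at f x l : derivable_pt_lim f x l -> cont_at f x.
Proof. intros Hf. apply cont_at_iff, derivable_continuous_pt. exists l. exact Hf. Qed.

Lemma cont_at_const c x : cont_at (fun _ => c) x.
Proof. apply derivable_cont_at with 0. apply dpl_const. Qed.

Lemma cont_at_ext f g x : (forall y, f y = g y) -> cont_at g x -> cont_at f x.
Proof.
  intros E Hg eps He. destruct (Hg eps He) as [d [Hd Hy]].
  exists d. split; auto. intros. rewrite !E. auto.
Qed.

Lemma cont_at_plus f g x : cont_at f x -> cont_at g x -> cont_at (fun y => f y + g y) x.
Proof. rewrite !cont_at_iff. apply continuity_pt_plus. Qed.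

Lemma cont_at_minus f g x : cont_at f x -> cont_at g x -> cont_at (fun y => f y - g y) x.
Proof. rewrite !cont_at_iff. apply continuity_pt_minus. Qed.

Lemma cont_at_mult f g x : cont_at f x -> cont_at g x -> cont_at (fun y => f y * g y) x.
Proof. rewrite !cont_at_iff. apply continuity_pt_mult. Qed.

Lemma cont_at_comp f g x : cont_at g x -> cont_at f (g x) -> cont_at (fun y => f (g y)) x.
Proof. rewrite !cont_at_iff. apply (continuity_pt_comp g f). Qed.

Lemma RInt_diff_bound f g a b B : (forall x, cont_at f x) -> (forall x, cont_at g x) ->
  (forall t, Rabs (f t - g t) <= B) -> Rabs (RInt f a b - RInt g a b) <= Rabs (b - a) * B.
Proof.
  intros Hf Hg Hb.
  assert (Ex : forall h a b, (forall x, cont_at h x) -> ex_RInt h a b)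
    by (intros; apply (@ex_RInt_continuous R_CompleteNormedModule); intros; apply cont_at_continuous; auto).
  assert (Hfg : forall a b, ex_RInt (fun t => f t - g t) a b)
    by (intros; apply Ex; intros; apply cont_at_minus; auto).
  rewrite <- (RInt_minus f g) by auto.
  destruct (Rle_dec a b) as [Hab|Hab].
  - rewrite (Rabs_right (b - a)) by lra. apply abs_RInt_le_const; auto.
  - rewrite <- (opp_RInt_swap _ b a) by auto.
    change (Rabs (- RInt (fun t => f t - g t) b a) <= Rabs (b - a) * B).
    rewrite Rabs_Ropp, (Rabs_left (b - a)), Ropp_minus_distr by lra.
    apply abs_RInt_le_const; auto; lra.
Qed.

Lemma RInt_derivable f a v : (forall x, cont_at f x) ->
  derivable_pt_lim (fun x => RInt f a x) v (f v).
Proof.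
  intros Hf. apply is_derive_Reals. apply (@is_derive_RInt R_CompleteNormedModule f (RInt f a) a v).
  - exists (mkposreal 1 Rlt_0_1). intros y _. apply RInt_correct.
    apply (@ex_RInt_continuous R_CompleteNormedModule). intros; apply cont_at_continuous; auto.
  - apply cont_at_continuous; auto.
Qed.

Lemma half_pow_pos n : 0 < (/2) ^ n.
Proof. apply pow_lt; lra. Qed.

Lemma half_pow_small eps : 0 < eps -> exists N, (/2) ^ N < eps.
Proof.
  intros He. destruct (pow_lt_1_zero (/2) ltac:(rewrite Rabs_right; lra) eps He) as [N HN].
  exists N. specialize (HN N (le_n N)). rewrite Rabs_right in HN; [exact HN|].
  apply Rle_ge, pow_le; lra.
Qed.

Lemma small_zero a : (forall n, Rabs a <= (/2) ^ n) -> a = 0.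
Proof.
  intros Ha. destruct (Req_dec a 0) as [|Hne]; auto. exfalso.
  pose proof (Rabs_pos_lt a Hne).
  destruct (half_pow_small (Rabs a) ltac:(lra)) as [N HN]. specialize (Ha N). lra.
Qed.

Section FastCauchy.
Variable x : nat -> R.
Hypothesis Hx : forall n, Rabs (x (S n) - x n) <= (/2) ^ (S n).

Lemma fast_cauchy_bound n m : (n <= m)%nat -> Rabs (x m - x n) <= (/2) ^ n - (/2) ^ m.
Proof.
  induction 1 as [|m Hnm IH].
  - rewrite Rminus_diag, Rabs_R0. lra.
  - replace (x (S m) - x n) with ((x (S m) - x m) + (x m - x n)) by ring.
    eapply Rle_trans; [apply Rabs_triang|]. pose proof (Hx m). simpl in *. lra.
Qed.

Lemma fast_cauchy : Cauchy_crit x.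
Proof.
  intros eps He. destruct (half_pow_small (eps / 2) ltac:(lra)) as [N HN].
  exists N. intros n m Hn Hm. unfold Rdist.
  pose proof (fast_cauchy_bound N n Hn). pose proof (fast_cauchy_bound N m Hm).
  pose proof (half_pow_pos n). pose proof (half_pow_pos m).
  replace (x n - x m) with ((x n - x N) - (x m - x N)) by ring.
  eapply Rle_lt_trans; [apply Rabs_triang|]. rewrite Rabs_Ropp. lra.
Qed.

Definition fast_lim : R := proj1_sig (Rcomplete.R_complete x fast_cauchy).

Lemma fast_lim_bound n : Rabs (fast_lim - x n) <= (/2) ^ n.
Proof.
  unfold fast_lim. destruct (Rcomplete.R_complete x fast_cauchy) as [l Hl]. simpl.
  apply Rle_plus_epsilon. intros eps He. destruct (Hl eps He) as [N HN].
  specialize (HN (max N n) ltac:(lia)). unfold Rdist in HN.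
  pose proof (fast_cauchy_bound n (max N n) ltac:(lia)). pose proof (half_pow_pos (max N n)).
  replace (l - x n) with ((x (max N n) - x n) - (x (max N n) - l)) by ring.
  eapply Rle_trans; [apply Rabs_triang|]. rewrite Rabs_Ropp. lra.
Qed.

End FastCauchy.

Lemma uniform_limit_cont (F : R -> R) (Fn : nat -> R -> R) x :
  (forall n u, Rabs (F u - Fn n u) <= (/2) ^ n) -> (forall n, cont_at (Fn n) x) -> cont_at F x.
Proof.
  intros Hb Hc eps He. destruct (half_pow_small (eps / 4) ltac:(lra)) as [N HN].
  destruct (Hc N (eps / 4) ltac:(lra)) as [d [Hd Hy]]. exists d. split; auto.
  intros y Hyx. specialize (Hy y Hyx). pose proof (Hb N y). pose proof (Hb N x).
  replace (F y - F x) with ((F y - Fn N y) + (Fn N y - Fn N x) - (F x - Fn N x)) by ring.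
  eapply Rle_lt_trans; [apply Rabs_triang|]. rewrite Rabs_Ropp.
  eapply Rle_lt_trans; [apply Rplus_le_compat_r; apply Rabs_triang|]. lra.
Qed.

(* [clamp u0 del] is the retraction of R onto [u0 - del, u0 + del]; it lets the
   Picard iteration below run on all of R. *)
Definition clamp (u0 del u : R) : R := Rmax (u0 - del) (Rmin (u0 + del) u).

Lemma clamp_in u0 del u : 0 <= del -> Rabs (clamp u0 del u - u0) <= del.
Proof. intros. unfold clamp, Rmax, Rmin. repeat destruct Rle_dec; apply Rabs_le; lra. Qed.

Lemma clamp_id u0 del u : Rabs (u - u0) <= del -> clamp u0 del u = u.
Proof.
  intros Hu. apply Rabs_le_between in Hu. unfold clamp.
  rewrite Rmin_right, Rmax_right by lra. reflexivity.
Qed.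

Lemma cont_at_clamp u0 del x : 0 <= del -> cont_at (clamp u0 del) x.
Proof.
  intros Hdel eps Heps. exists eps. split; auto. intros y Hy.
  eapply Rle_lt_trans; [|exact Hy].
  pose proof (Rle_abs (y - x)). pose proof (Rle_abs (- (y - x))). rewrite Rabs_Ropp in *.
  unfold clamp, Rmax, Rmin. repeat destruct Rle_dec; apply Rabs_le; lra.
Qed.

(** * Local existence for the linear ODE  c'' = k c *)

(* Picard iteration for the system c' = d, d' = kc c with c(u0) = d(u0) = 1,
   where kc is continuous and bounded by M on R and the interval has radius del.
   The smallness assumptions make the iteration a contraction by 1/2. *)
Section Picard.
Variables (kc : R -> R) (u0 del M : R).
Hypothesis Hkc : forall x, cont_at kc x.
Hypothesis HM : forall x, Rabs (kc x) <= M.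
Hypothesis Hdel : 0 < del.
Hypothesis Hdel1 : del <= / 8.
Hypothesis HdelM : del * M <= / 8.

Let J (phi : R -> R) (u : R) : R := RInt phi u0 (clamp u0 del u).

Lemma M_nonneg : 0 <= M.
Proof. pose proof (HM 0). pose proof (Rabs_pos (kc 0)). lra. Qed.

Lemma J_diff_bound phi psi B u : (forall x, cont_at phi x) -> (forall x, cont_at psi x) ->
  (forall t, Rabs (phi t - psi t) <= B) -> Rabs (J phi u - J psi u) <= del * B.
Proof.
  intros Hphi Hpsi HB. unfold J.
  eapply Rle_trans; [apply (RInt_diff_bound phi psi _ _ B); assumption|].
  apply Rmult_le_compat_r; [|apply clamp_in; lra].
  eapply Rle_trans; [apply Rabs_pos|apply (HB 0)].
Qed.

Lemma J_bound phi B u : (forall x, cont_at phi x) ->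
  (forall t, Rabs (phi t) <= B) -> Rabs (J phi u) <= del * B.
Proof.
  intros Hphi HB.
  assert (J0 : J (fun _ => 0) u = 0) by (unfold J; rewrite RInt_const; apply Rmult_0_r).
  replace (J phi u) with (J phi u - J (fun _ => 0) u) by (rewrite J0; ring).
  apply J_diff_bound; [assumption|intros; apply cont_at_const|].
  intros t. rewrite Rminus_0_r. apply HB.
Qed.

Lemma J_cont phi x : (forall y, cont_at phi y) -> cont_at (J phi) x.
Proof.
  intros Hphi. apply (cont_at_comp (fun v => RInt phi u0 v) (clamp u0 del)).
  - apply cont_at_clamp; lra.
  - eapply derivable_cont_at. apply RInt_derivable; auto.
Qed.

Lemma J_derivable (F phi : R -> R) u : (forall x, cont_at phi x) ->
  (forall v, F v = 1 + J phi v) -> Rabs (u - u0) < del -> derivable_pt_lim F u (phi u).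
Proof.
  intros Hphi HF Hu.
  apply (derivable_pt_lim_locally (fun v => 1 + RInt phi u0 v) F u _ (del - Rabs (u - u0))); [lra| |].
  - intros t Ht. rewrite HF. unfold J. rewrite clamp_id; [reflexivity|].
    pose proof (Rabs_triang (t - u) (u - u0)). replace (t - u + (u - u0)) with (t - u0) in * by ring.
    lra.
  - replace (phi u) with (0 + phi u) by ring. apply dpl_plus; [apply dpl_const|].
    apply RInt_derivable; auto.
Qed.

Fixpoint picard (n : nat) : (R -> R) * (R -> R) :=
  match n with
  | O => (fun _ => 1, fun _ => 1)
  | S n => let (c, d) := picard n in (fun u => 1 + J d u, fun u => 1 + J (fun s => kc s * c s) u)
  end.

Definition cn n := fst (picard n).
Definition dn n := snd (picard n).

Lemma cn_S n u : cn (S n) u = 1 + J (dn n) u.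
Proof. unfold cn, dn. simpl. destruct (picard n). reflexivity. Qed.
Lemma dn_S n u : dn (S n) u = 1 + J (fun s => kc s * cn n s) u.
Proof. unfold cn, dn. simpl. destruct (picard n). reflexivity. Qed.

Lemma picard_cont n : (forall x, cont_at (cn n) x) /\ (forall x, cont_at (dn n) x).
Proof.
  induction n as [|n [IHc IHd]].
  - split; intro x; unfold cn, dn; simpl; apply cont_at_const.
  - split; intro x.
    + apply (cont_at_ext _ _ x (cn_S n)), cont_at_plus; [apply cont_at_const|apply J_cont; auto].
    + apply (cont_at_ext _ _ x (dn_S n)), cont_at_plus; [apply cont_at_const|].
      apply J_cont. intro y. apply cont_at_mult; auto.
Qed.

Lemma picard_step n u :
  Rabs (cn (S n) u - cn n u) <= (/2) ^ (S n) /\ Rabs (dn (S n) u - dn n u) <= (/2) ^ (S n).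
Proof.
  revert u. induction n as [|n IH]; intro u; rewrite cn_S, dn_S.
  - unfold cn, dn; simpl. rewrite !Rplus_minus_l. pose proof M_nonneg. split.
    + eapply Rle_trans; [apply (J_bound _ 1)|]; [intros; apply cont_at_const|intros; rewrite Rabs_R1; lra|lra].
    + eapply Rle_trans; [apply (J_bound _ M)|]; [intros; apply cont_at_mult; auto; apply cont_at_const
                                                |intros; rewrite Rmult_1_r; auto|lra].
  - destruct (picard_cont n) as [Cc Cd]. destruct (picard_cont (S n)) as [Cc' Cd'].
    rewrite (cn_S n), (dn_S n). replace (1 + J _ u - (1 + J _ u)) with (J (dn (S n)) u - J (dn n) u) by ring.
    replace (1 + J (fun s => kc s * cn (S n) s) u - _)
      with (J (fun s => kc s * cn (S n) s) u - J (fun s => kc s * cn n s) u) by ring.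
    pose proof (half_pow_pos (S n)). pose proof M_nonneg. split.
    + eapply Rle_trans; [apply (J_diff_bound _ _ ((/2) ^ (S n))); auto; intros; apply IH|].
      assert (del * (/2) ^ (S n) <= / 8 * (/2) ^ (S n)) by (apply Rmult_le_compat_r; lra).
      simpl in *. lra.
    + eapply Rle_trans; [apply (J_diff_bound _ _ (M * (/2) ^ (S n)))|].
      * intros; apply cont_at_mult; auto.
      * intros; apply cont_at_mult; auto.
      * intros t. rewrite <- Rmult_minus_distr_l, Rabs_mult.
        apply Rmult_le_compat; auto using Rabs_pos. apply IH.
      * assert (del * M * (/2) ^ (S n) <= / 8 * (/2) ^ (S n)) by (apply Rmult_le_compat_r; lra).
        rewrite <- Rmult_assoc. simpl in *. lra.
Qed.

Definition cl u := fast_lim (fun n => cn n u) (fun n => proj1 (picard_step n u)).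
Definition dl u := fast_lim (fun n => dn n u) (fun n => proj2 (picard_step n u)).

Lemma cl_bound n u : Rabs (cl u - cn n u) <= (/2) ^ n.
Proof. apply (fast_lim_bound (fun n => cn n u)). Qed.
Lemma dl_bound n u : Rabs (dl u - dn n u) <= (/2) ^ n.
Proof. apply (fast_lim_bound (fun n => dn n u)). Qed.

Lemma cl_cont x : cont_at cl x.
Proof. apply (uniform_limit_cont cl cn); [apply cl_bound|intro n; apply (picard_cont n)]. Qed.
Lemma dl_cont x : cont_at dl x.
Proof. apply (uniform_limit_cont dl dn); [apply dl_bound|intro n; apply (picard_cont n)]. Qed.

Lemma cl_eq u : cl u = 1 + J dl u.
Proof.
  apply Rminus_diag_uniq, small_zero. intro n. destruct (picard_cont n) as [Cc Cd].
  pose proof (cl_bound (S n) u) as B1. rewrite cn_S in B1.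
  pose proof (J_diff_bound (dn n) dl ((/2) ^ n) u Cd dl_cont) as B2.
  replace (cl u - (1 + J dl u)) with ((cl u - (1 + J (dn n) u)) + (J (dn n) u - J dl u)) by ring.
  eapply Rle_trans; [apply Rabs_triang|]. pose proof (half_pow_pos n).
  assert (B2' : Rabs (J (dn n) u - J dl u) <= del * (/2) ^ n)
    by (apply B2; intro t; rewrite Rabs_minus_sym; apply dl_bound).
  simpl in B1. nra.
Qed.

Lemma dl_eq u : dl u = 1 + J (fun s => kc s * cl s) u.
Proof.
  apply Rminus_diag_uniq, small_zero. intro n. destruct (picard_cont n) as [Cc Cd].
  pose proof (dl_bound (S n) u) as B1. rewrite dn_S in B1.
  assert (B2 : Rabs (J (fun s => kc s * cn n s) u - J (fun s => kc s * cl s) u) <= del * (M * (/2) ^ n)).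
  { apply J_diff_bound; try (intros; apply cont_at_mult; auto; apply cl_cont).
    intro t. rewrite <- Rmult_minus_distr_l, Rabs_mult.
    apply Rmult_le_compat; auto using Rabs_pos. rewrite Rabs_minus_sym. apply cl_bound. }
  replace (dl u - (1 + J (fun s => kc s * cl s) u)) with
    ((dl u - (1 + J (fun s => kc s * cn n s) u))
     + (J (fun s => kc s * cn n s) u - J (fun s => kc s * cl s) u)) by ring.
  eapply Rle_trans; [apply Rabs_triang|]. pose proof (half_pow_pos n).
  rewrite <- Rmult_assoc in B2. simpl in B1. nra.
Qed.

Lemma cl_derivable u : Rabs (u - u0) < del -> derivable_pt_lim cl u (dl u).
Proof. apply J_derivable; [apply dl_cont|apply cl_eq]. Qed.

Lemma dl_derivable u : Rabs (u - u0) < del -> derivable_pt_lim dl u (kc u * cl u).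
Proof.
  apply (J_derivable dl (fun s => kc s * cl s)); [|apply dl_eq].
  intros; apply cont_at_mult; auto; apply cl_cont.
Qed.

(* Both components stay close to their initial value 1. *)
Lemma cl_pos u : 0 < cl u.
Proof.
  rewrite cl_eq.
  assert (B : Rabs (J dl u) <= del * 2).
  { apply J_bound; [apply dl_cont|]. intro t.
    pose proof (dl_bound 0 t) as Bt. unfold dn in Bt; simpl in Bt.
    apply Rabs_le_between in Bt. apply Rabs_le. lra. }
  apply Rabs_le_between in B. lra.
Qed.

Lemma dl_pos u : 0 < dl u.
Proof.
  rewrite dl_eq.
  assert (B : Rabs (J (fun s => kc s * cl s) u) <= del * (M * 2)).
  { apply J_bound; [intros; apply cont_at_mult; auto; apply cl_cont|]. intro t.
    rewrite Rabs_mult. apply Rmult_le_compat; auto using Rabs_pos.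
    pose proof (cl_bound 0 t) as Bt. unfold cn in Bt; simpl in Bt.
    apply Rabs_le_between in Bt. apply Rabs_le. lra. }
  apply Rabs_le_between in B. rewrite <- Rmult_assoc in B. lra.
Qed.

End Picard.

Lemma linear_ode_exists (k : R -> R) u0 e : 0 < e ->
  (forall u, Rabs (u - u0) < e -> cont_at k u) ->
  exists del (c d : R -> R), 0 < del /\ del < e /\ forall u, Rabs (u - u0) < del ->
    derivable_pt_lim c u (d u) /\ derivable_pt_lim d u (k u * c u) /\ 0 < c u /\ 0 < d u.
Proof.
  intros He Hk.
  destruct (Hk u0 ltac:(rewrite Rminus_diag, Rabs_R0; lra) 1 ltac:(lra)) as [d1 [Hd1 Hk1]].
  set (M := Rabs (k u0) + 1).
  assert (HM0 : 0 < M) by (unfold M; pose proof (Rabs_pos (k u0)); lra).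
  set (del := Rmin (Rmin (e / 2) (d1 / 2)) (Rmin (/ 8) (/ (8 * M)))).
  assert (Hdp : 0 < del).
  { unfold del. repeat apply Rmin_pos; try lra. apply Rinv_0_lt_compat. lra. }
  assert (Hde : del <= e / 2) by (unfold del; eapply Rle_trans; [apply Rmin_l|apply Rmin_l]).
  assert (Hdd : del <= d1 / 2) by (unfold del; eapply Rle_trans; [apply Rmin_l|apply Rmin_r]).
  assert (Hd8 : del <= / 8) by (unfold del; eapply Rle_trans; [apply Rmin_r|apply Rmin_l]).
  assert (HdM : del <= / (8 * M)) by (unfold del; eapply Rle_trans; [apply Rmin_r|apply Rmin_r]).
  assert (HdelM : del * M <= / 8).
  { apply Rmult_le_compat_r with (r := M) in HdM; [|lra].
    replace (/ (8 * M) * M) with (/ 8) in HdM by (field; lra). exact HdM. }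
  set (kc := fun s => k (clamp u0 del s)).
  assert (Hkc : forall x, cont_at kc x).
  { intro x. apply (cont_at_comp k (clamp u0 del)); [apply cont_at_clamp; lra|].
    apply Hk. pose proof (clamp_in u0 del x ltac:(lra)). lra. }
  assert (HM : forall x, Rabs (kc x) <= M).
  { intro x. unfold kc. pose proof (clamp_in u0 del x ltac:(lra)).
    specialize (Hk1 (clamp u0 del x) ltac:(lra)).
    pose proof (Rabs_triang (k (clamp u0 del x) - k u0) (k u0)).
    replace (k (clamp u0 del x) - k u0 + k u0) with (k (clamp u0 del x)) in * by ring.
    unfold M. lra. }
  exists del, (cl kc u0 del M Hkc HM Hdp Hd8 HdelM), (dl kc u0 del M Hkc HM Hdp Hd8 HdelM).
  split; [auto|]. split; [lra|]. intros u Hu. split; [|split; [|split]].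
  - apply cl_derivable; auto.
  - replace (k u) with (kc u) by (unfold kc; rewrite clamp_id; auto; lra). apply dl_derivable; auto.
  - apply cl_pos.
  - apply dl_pos.
Qed.

(** * Smoothness of solutions of the Riccati equation w' = -K - w^2/2 *)

(* Polynomial expressions in w and the derivatives K_n of K; this class is closed
   under differentiation, which yields all derivatives of w. *)
Inductive rexpr : Type :=
  | EW : rexpr
  | EK : nat -> rexpr
  | EC : R -> rexpr
  | EPlus : rexpr -> rexpr -> rexpr
  | EMult : rexpr -> rexpr -> rexpr.

Section Riccati.
Variables (w : R -> R) (K : nat -> R -> R) (I : R -> Prop).
Hypothesis Hw : forall u, I u -> derivable_pt_lim w u (- K 0%nat u - / 2 * (w u * w u)).
Hypothesis HK : forall n u, I u -> derivable_pt_lim (K n) u (K (S n) u).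

Fixpoint eval (e : rexpr) (u : R) : R :=
  match e with
  | EW => w u
  | EK n => K n u
  | EC r => r
  | EPlus e1 e2 => eval e1 u + eval e2 u
  | EMult e1 e2 => eval e1 u * eval e2 u
  end.

Fixpoint rderiv (e : rexpr) : rexpr :=
  match e with
  | EW => EPlus (EMult (EC (-1)) (EK 0)) (EMult (EC (- / 2)) (EMult EW EW))
  | EK n => EK (S n)
  | EC _ => EC 0
  | EPlus e1 e2 => EPlus (rderiv e1) (rderiv e2)
  | EMult e1 e2 => EPlus (EMult (rderiv e1) e2) (EMult e1 (rderiv e2))
  end.

Lemma eval_derivable e u : I u -> derivable_pt_lim (eval e) u (eval (rderiv e) u).
Proof.
  intros Iu. induction e as [| n | r | e1 IH1 e2 IH2 | e1 IH1 e2 IH2]; simpl.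
  - eapply dpl_eq; [apply Hw; exact Iu|ring].
  - apply HK; exact Iu.
  - apply dpl_const.
  - apply dpl_plus; assumption.
  - apply dpl_mult; assumption.
Qed.

Definition w_deriv (n : nat) : R -> R := eval (Nat.iter n rderiv EW).

Lemma w_deriv_derivable n u : I u -> derivable_pt_lim (w_deriv n) u (w_deriv (S n) u).
Proof. intros Iu. unfold w_deriv. rewrite Nat.iter_succ. apply eval_derivable; exact Iu. Qed.

End Riccati.

Section UFunctions.
Variables (V : pt -> Prop) (I : R -> Prop).
Hypothesis HVI : forall q, V q -> I (coord q 0).

Lemma pd_u_function (F F' : R -> R) j q : V q ->
  (forall u, I u -> derivable_pt_lim F u (F' u)) ->
  pd j (fun r => F (coord r 0)) q = if Nat.eqb j 0 then F' (coord q 0) else 0.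
Proof.
  intros Vq HF. apply pd_spec. destruct (Nat.eqb_spec j 0) as [->|Hj].
  - eapply derivable_pt_lim_ext; [|exact (HF _ (HVI q Vq))].
    intro t. rewrite coord_upd_same by lia. reflexivity.
  - eapply derivable_pt_lim_ext; [|apply dpl_const].
    intro t. rewrite coord_upd_other by (lia || auto). reflexivity.
Qed.

Lemma u_function_smooth (Fs : nat -> R -> R) :
  (forall n u, I u -> derivable_pt_lim (Fs n) u (Fs (S n) u)) ->
  smooth_on V (fun q => Fs 0%nat (coord q 0)).
Proof.
  intros HFs.
  exists (fun l q => if forallb (Nat.eqb 0) l then Fs (length l) (coord q 0) else 0).
  split; [|split].
  - intros q Vq. reflexivity.
  - intros l i q Hi Vq.
    change (forallb (Nat.eqb 0) (i :: l)) with (Nat.eqb 0 i && forallb (Nat.eqb 0) l)%bool.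
    change (length (i :: l)) with (S (length l)).
    destruct (forallb (Nat.eqb 0) l).
    + rewrite Bool.andb_true_r. destruct (Nat.eqb_spec 0 i) as [<-|Hi0].
      * eapply derivable_pt_lim_ext; [|exact (HFs _ _ (HVI q Vq))].
        intro t. rewrite coord_upd_same by lia. reflexivity.
      * eapply derivable_pt_lim_ext; [|apply dpl_const].
        intro t. rewrite coord_upd_other by (lia || auto). reflexivity.
    + rewrite Bool.andb_false_r. apply dpl_const.
  - intros l q Vq eps Heps. destruct (forallb (Nat.eqb 0) l).
    + destruct (derivable_cont_at _ _ _ (HFs (length l) _ (HVI q Vq)) eps Heps) as [del [Hdel Hc]].
      exists del. split; [exact Hdel|]. intros r Vr Dr. apply Hc.
      rewrite Rabs_minus_sym. eapply Rle_lt_trans; [apply dist4_coord_le; lia|exact Dr].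
    + exists 1. split; [lra|]. intros. rewrite Rminus_diag, Rabs_R0. exact Heps.
Qed.

End UFunctions.

(* Local solution F of F'' + F'^2/2 = -K_0 with F' > 0, through the
   linearisation F = 2 ln c, c'' = -(K_0/2) c. *)
Lemma riccati_local_solution (K : nat -> R -> R) u0 e : 0 < e ->
  (forall n u, Rabs (u - u0) < e -> derivable_pt_lim (K n) u (K (S n) u)) ->
  exists del (F w : R -> R), 0 < del /\ del < e /\ forall u, Rabs (u - u0) < del ->
    derivable_pt_lim F u (w u) /\
    derivable_pt_lim w u (- K 0%nat u - / 2 * (w u * w u)) /\ 0 < w u.
Proof.
  intros He HK.
  destruct (linear_ode_exists (fun u => - / 2 * K 0%nat u) u0 e He) as [del [c [d [Hdel [Hdele Hcd]]]]].
  { intros u Hu. apply (derivable_cont_at _ u (- / 2 * K 1%nat u)), dpl_scal, HK, Hu. }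
  exists del, (fun u => 2 * ln (c u)), (fun u => 2 * d u / c u).
  split; [exact Hdel|]. split; [exact Hdele|]. intros u Hu.
  destruct (Hcd u Hu) as [Dc [Dd [Pc Pd]]]. split; [|split].
  - eapply dpl_eq; [apply dpl_scal, (derivable_pt_lim_comp c ln); [exact Dc|apply derivable_pt_lim_ln; exact Pc]|].
    field. lra.
  - eapply dpl_eq; [apply (derivable_pt_lim_div (fun u => 2 * d u) c); [apply dpl_scal; exact Dd|exact Dc|lra]|].
    unfold Rsqr. field. lra.
  - apply Rdiv_lt_0_compat; lra.
Qed.

(** * pp-waves with harmonic Weyl tensor are isotropically conformally Einstein *)

Section Backward.
Variables (H : R -> R -> R -> R) (U : pt -> Prop) (D : list nat -> pt -> R).
Hypothesis HU : is_open U.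
Hypothesis HD0 : forall p, U p -> D nil p = Hof H p.
Hypothesis HD1 : forall l i p, (i < 4)%nat -> U p ->
  derivable_pt_lim (fun t => D l (upd p i t)) (coord p i) (D (i :: l) p).
Hypothesis HR : forall q, U q ->
  pd 2 (Ric (ppw_g H) (ppw_gi H) 0 0) q = 0 /\ pd 3 (Ric (ppw_g H) (ppw_gi H) 0 0) q = 0.

Notation g := (ppw_g H).
Notation gi := (ppw_gi H).

Lemma rho_uu_transverse q m : U q -> (m = 1 \/ m = 2 \/ m = 3)%nat ->
  derivable_pt_lim (fun t => rho_uu D (upd q m t)) (coord q m) 0.
Proof.
  intros Uq Hm. assert (Hm4 : (m < 4)%nat) by lia.
  assert (Dm : derivable_pt_lim (fun t => rho_uu D (upd q m t)) (coord q m)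
                 (- / 2 * (D (m :: 2 :: 2 :: nil)%nat q + D (m :: 3 :: 3 :: nil)%nat q)))
    by (apply dpl_scal, dpl_plus; apply HD1; auto).
  replace 0 with (pd m (Ric g gi 0 0) q); [erewrite (pd_locally U _ (rho_uu D)), pd_spec; eauto|].
  - intros r Ur. apply (Ric_ppw H U D); auto; lia.
  - destruct Hm as [->|[->| ->]].
    + apply pd1_v_independent, Ric_v_independent.
    + exact (proj1 (HR q Uq)).
    + exact (proj2 (HR q Uq)).
Qed.

Variables (p : pt) (e0 : R).
Hypothesis He0 : 0 < e0.
Hypothesis HB0 : forall q, dist4 p q < e0 -> U q.

Definition Kn (n : nat) (u : R) : R :=
  - / 2 * (D (repeat 0%nat n ++ (2 :: 2 :: nil))%nat (upd p 0 u)
           + D (repeat 0%nat n ++ (3 :: 3 :: nil))%nat (upd p 0 u)).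

Lemma Kn_derivable n u : Rabs (u - coord p 0) < e0 -> derivable_pt_lim (Kn n) u (Kn (S n) u).
Proof.
  intros Hu. assert (Uu : U (upd p 0 u)) by (apply HB0, dist4_upd; assumption).
  pose proof (HD1 (repeat 0%nat n ++ (2 :: 2 :: nil))%nat 0 _ ltac:(lia) Uu) as D2.
  pose proof (HD1 (repeat 0%nat n ++ (3 :: 3 :: nil))%nat 0 _ ltac:(lia) Uu) as D3.
  rewrite coord_upd_same in D2, D3 by lia.
  unfold Kn. apply dpl_scal, dpl_plus; (eapply derivable_pt_lim_ext; [|eassumption]);
    intro t; simpl; rewrite upd_upd_same; reflexivity.
Qed.

Lemma Ric_uu_on_ball q : dist4 p q < e0 -> Ric g gi 0 0 q = Kn 0 (coord q 0).
Proof.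
  intros Bq. rewrite (Ric_ppw H U D) by (auto; lia).
  apply (ball_depends_on_u (rho_uu D) p e0 He0); [|exact Bq].
  intros r m Br Hm. apply rho_uu_transverse; auto.
Qed.

(* With F'' + F'^2/2 = -ρ_uu(u), the function f = F(u) solves the isotropic
   quasi-Einstein equation with λ = 0 on a ball around p. *)
Lemma Einstein_near_point : exists V : pt -> Prop, is_open V /\ V p /\ (forall q, V q -> U q) /\
  exists f : pt -> R, smooth_on V f /\
    (forall q, V q -> exists i, (i < 4)%nat /\ grad gi f i q <> 0) /\
    (forall q, V q -> sum4 (fun i => sum4 (fun j => gi q i j * pd i f q * pd j f q)) = 0) /\
    exists lam : pt -> R, forall q i j, V q -> (i < 4)%nat -> (j < 4)%nat ->
      Hess g gi f i j q + Ric g gi i j q + / 2 * (pd i f q * pd j f q) = lam q * g q i j.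
Proof.
  destruct (riccati_local_solution Kn (coord p 0) e0 He0 Kn_derivable)
    as [del [F [w [Hdel [Hdele Hsol]]]]].
  set (I := fun u => Rabs (u - coord p 0) < del).
  set (V := fun q => dist4 p q < del).
  assert (VI : forall q, V q -> I (coord q 0)).
  { intros q Vq. unfold I. rewrite Rabs_minus_sym.
    eapply Rle_lt_trans; [apply dist4_coord_le; lia|exact Vq]. }
  assert (VB : forall q, V q -> dist4 p q < e0) by (intros q Vq; unfold V in Vq; lra).
  assert (Hw : forall u, I u -> derivable_pt_lim w u (- Kn 0%nat u - / 2 * (w u * w u)))
    by (intros u Iu; apply Hsol, Iu).
  assert (HK : forall n u, I u -> derivable_pt_lim (Kn n) u (Kn (S n) u))
    by (intros n u Iu; apply Kn_derivable; unfold I in Iu; lra).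
  set (f := fun q => F (coord q 0)).
  assert (Df : forall j q, V q -> pd j f q = if Nat.eqb j 0 then w (coord q 0) else 0)
    by (intros; apply (pd_u_function V I VI); auto; intros; apply Hsol; auto).
  assert (DDf : forall i j q, V q -> pd i (fun r => pd j f r) q =
            if Nat.eqb j 0 then (if Nat.eqb i 0
              then - Kn 0%nat (coord q 0) - / 2 * (w (coord q 0) * w (coord q 0)) else 0) else 0).
  { intros i j q Vq.
    rewrite (pd_locally V _ (fun r => if Nat.eqb j 0 then w (coord r 0) else 0) i q)
      by (apply ball_open || auto).
    destruct (Nat.eqb j 0); [|apply pd_const].
    apply (pd_u_function V I VI w (fun u => - Kn 0%nat u - / 2 * (w u * w u))); auto. }
  exists V. split; [apply ball_open|]. split; [unfold V; rewrite dist4_refl; exact Hdel|].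
  split; [intros; apply HB0, VB; assumption|].
  exists f. split; [|split; [|split]].
  - apply (u_function_smooth V I VI (fun n => match n with O => F | S m => w_deriv w Kn m end)).
    intros [|m] u Iu; [apply Hsol, Iu|apply (w_deriv_derivable w Kn I); auto].
  - intros q Vq. exists 1%nat. split; [lia|]. unfold grad, sum4. rewrite !Df by exact Vq. simpl.
    pose proof (proj2 (proj2 (Hsol _ (VI q Vq)))). lra.
  - intros q Vq. unfold sum4. rewrite !Df by exact Vq. simpl. ring.
  - exists (fun _ => 0). intros q i j Vq Hi Hj. unfold Hess, sum4.
    rewrite !Gam_ppw, !Df, DDf by exact Vq.
    destruct i as [|[|[|[|i]]]]; destruct j as [|[|[|[|j]]]]; try lia;
      rewrite ?Ric_uu_on_ball by auto; rewrite ?(Ric_ppw H U D) by (auto; lia);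
      cbv beta iota delta [ppw_Gam ppw_g ppw_Ric Nat.eqb]; ring.
Qed.

End Backward.

Theorem corollary3p5 (H : R -> R -> R -> R) (U : pt -> Prop) :
  is_open U -> smooth_on U (Hof H) ->
  (loc_iso_conf_Einstein (ppw_g H) (ppw_gi H) U <-> harmonic_Weyl (ppw_g H) (ppw_gi H) U).
Proof.
  intros HU [D [HD0 [HD1 _]]].
  rewrite (harmonic_Weyl_ppw H U D HU HD0 HD1).
  split.
  - intros HE p Up.
    destruct (HE p Up) as [V [OV [Vp [VU [f [[Df [HF0 [HF1 HF2]]] [Hgrad [Hnull [lam Heq]]]]]]]]].
    exact (forward_at H U D HU HD0 HD1 V f Df lam OV VU HF0 HF1 HF2 Hgrad Hnull Heq p Vp).
  - intros HR p Up. destruct (HU p Up) as [e0 [He0 HB0]].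
    exact (Einstein_near_point H U D HU HD0 HD1 HR p e0 He0 HB0).
Qed.
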